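(* There exists a dense subset $P \subseteq \mathbb{R}$ such that neither the difference set $P-P=\{x-y : x,y\in P\}$ nor the difference set $P^c-P^c=\{x-y : x,y\in \mathbb{R}\setminus P\}$ contains any interval of $\mathbb{R}$ of positive length.
   Context: $P^c=\mathbb{R}\setminus P$ denotes the complement of $P$ in $\mathbb{R}$. *)

From Stdlib Require Import Reals.
Open Scope R_scope.

Definition dense_in_R (P : R -> Prop) : Prop :=
  forall a b : R, a < b -> exists x : R, a < x < b /\ P x.

Definition diff_set (S : R -> Prop) : R -> Prop :=
  fun z => exists x y : R, S x /\ S y /\ z = x - y.

Definition complR (P : R -> Prop) : R -> Prop := fun x => ~ P x.

Definition contains_interval (S : R -> Prop) : Prop :=
  exists a b : R, a < b /\ forall z : R, a < z < b -> S z.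

From Stdlib Require Import Reals ZArith Lra Lia ClassicalEpsilon FunctionalExtensionality PropExtensionality.
Open Scope R_scope.

(* Let G = Z[1/3] and H = 2 Z[1/3], a subgroup of index 2 whose two cosets
   H and G \ H are both dense.  Pick a representative r(x) of every coset
   x + G of G in R and put P = { x | x - r(x) in H }.  If x - y lies in G,
   then x and y share the representative, so for x, y both in P (or both
   outside P) the difference x - y = (x - r x) - (y - r y) lies in H.
   Hence neither P - P nor P^c - P^c meets the dense set G \ H, while P
   contains the dense set r(0) + H. *)

Section IndexTwoSubgroup.

Variables G H : R -> Prop.
Hypothesis G_0 : G 0.
Hypothesis G_sub : forall x y, G x -> G y -> G (x - y).
Hypothesis H_sub : forall x y, H x -> H y -> H (x - y).
Hypothesis H_G : forall x, H x -> G x.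
Hypothesis nonH_sub : forall x y, G x -> ~ H x -> G y -> ~ H y -> H (x - y).
Hypothesis H_dense : dense_in_R H.
Hypothesis nonH_dense : dense_in_R (fun z => G z /\ ~ H z).

Definition coset_rep (x : R) : R := epsilon (inhabits 0) (fun y => G (x - y)).

Definition coset_selection (x : R) : Prop := H (x - coset_rep x).

Lemma coset_rep_spec x : G (x - coset_rep x).
Proof.
  unfold coset_rep. apply epsilon_spec. exists x.
  replace (x - x) with 0 by ring. exact G_0.
Qed.

Lemma coset_rep_eq x y : G (x - y) -> coset_rep x = coset_rep y.
Proof.
  intros Gxy. unfold coset_rep. f_equal.
  apply functional_extensionality; intro w.
  apply propositional_extensionality; split; intro Gw.
  - replace (y - w) with ((x - w) - (x - y)) by ring. now apply G_sub.
  - replace (x - w) with ((x - y) - (0 - (y - w))) by ring.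
    apply G_sub; [exact Gxy |]. now apply G_sub.
Qed.

Lemma sub_same_coset x y :
  G (x - y) -> x - y = (x - coset_rep x) - (y - coset_rep y).
Proof. intros Gxy. rewrite (coset_rep_eq x y Gxy). ring. Qed.

Lemma coset_selection_dense : dense_in_R coset_selection.
Proof.
  intros a b Hab.
  set (r := coset_rep 0).
  destruct (H_dense (a - r) (b - r)) as [h [Hh Hh_in]]; [lra |].
  exists (r + h). split; [lra |].
  assert (Gh : G (r + h - 0)).
  { replace (r + h - 0) with (h - (0 - r)) by ring.
    apply G_sub; [now apply H_G | apply coset_rep_spec]. }
  unfold coset_selection. rewrite (coset_rep_eq _ _ Gh).
  now replace (r + h - coset_rep 0) with h by (unfold r; ring).
Qed.

Lemma diff_set_coset_selection z :
  diff_set coset_selection z -> G z -> H z.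
Proof.
  intros [x [y [Px [Py ->]]]] Gz.
  rewrite (sub_same_coset x y Gz). now apply H_sub.
Qed.

Lemma diff_set_compl_coset_selection z :
  diff_set (complR coset_selection) z -> G z -> H z.
Proof.
  intros [x [y [Px [Py ->]]]] Gz.
  rewrite (sub_same_coset x y Gz).
  apply nonH_sub; trivial; apply coset_rep_spec.
Qed.

Lemma no_interval_of_nonH_free (S : R -> Prop) :
  (forall z, S z -> G z -> H z) -> ~ contains_interval S.
Proof.
  intros SGH [a [b [Hab Hin]]].
  destruct (nonH_dense a b Hab) as [z [Hz [Gz nHz]]].
  exact (nHz (SGH z (Hin z Hz) Gz)).
Qed.

End IndexTwoSubgroup.

Definition triadic (z : R) : Prop := exists (k : nat) (n : Z), z * 3 ^ k = IZR n.

Definition even_triadic (z : R) : Prop :=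
  exists (k : nat) (n : Z), z * 3 ^ k = IZR (2 * n).

Lemma pow3_IZR k : 3 ^ k = IZR (3 ^ Z.of_nat k).
Proof. now rewrite <- pow_IZR. Qed.

Lemma pow3_pos k : 0 < 3 ^ k.
Proof. apply pow_lt; lra. Qed.

Lemma Z_odd_pow3 k : Z.odd (3 ^ Z.of_nat k) = true.
Proof.
  induction k as [|k IH]; [reflexivity |].
  rewrite Nat2Z.inj_succ, Z.pow_succ_r by lia.
  now rewrite Z.odd_mul, IH.
Qed.

Lemma Z_even_double n : Z.odd n = false -> n = (2 * Z.div2 n)%Z.
Proof. intros E. rewrite (Z.div2_odd n) at 1. rewrite E. simpl. lia. Qed.

Lemma sub_numerator x y k j n m :
  x * 3 ^ k = IZR n -> y * 3 ^ j = IZR m ->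
  (x - y) * 3 ^ (k + j) = IZR (n * 3 ^ Z.of_nat j - m * 3 ^ Z.of_nat k).
Proof.
  intros Hx Hy.
  rewrite minus_IZR, !mult_IZR, <- !pow3_IZR, pow_add, <- Hx, <- Hy. ring.
Qed.

Lemma triadic_0 : triadic 0.
Proof. exists 0%nat, 0%Z. simpl. ring. Qed.

Lemma triadic_sub x y : triadic x -> triadic y -> triadic (x - y).
Proof.
  intros [k [n Hx]] [j [m Hy]]. exists (k + j)%nat.
  eexists. exact (sub_numerator x y k j n m Hx Hy).
Qed.

Lemma even_triadic_sub x y :
  even_triadic x -> even_triadic y -> even_triadic (x - y).
Proof.
  intros [k [n Hx]] [j [m Hy]].
  exists (k + j)%nat, (n * 3 ^ Z.of_nat j - m * 3 ^ Z.of_nat k)%Z.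
  rewrite (sub_numerator x y k j _ _ Hx Hy). f_equal. ring.
Qed.

Lemma even_triadic_triadic x : even_triadic x -> triadic x.
Proof. intros [k [n Hx]]. now exists k, (2 * n)%Z. Qed.

Lemma odd_numerator_not_even_triadic x k n :
  x * 3 ^ k = IZR n -> Z.odd n = true -> ~ even_triadic x.
Proof.
  intros Hx On [j [m Hm]].
  assert (E : (n * 3 ^ Z.of_nat j = 2 * m * 3 ^ Z.of_nat k)%Z).
  { apply eq_IZR. rewrite !mult_IZR, <- !pow3_IZR, <- Hx, <- mult_IZR, <- Hm.
    ring. }
  apply (f_equal Z.odd) in E.
  rewrite !Z.odd_mul, On, Z_odd_pow3 in E. discriminate.
Qed.

Lemma triadic_odd_numerator x :
  triadic x -> ~ even_triadic x ->
  exists k n, x * 3 ^ k = IZR n /\ Z.odd n = true.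
Proof.
  intros [k [n Hx]] nEx. exists k, n. split; [exact Hx |].
  destruct (Z.odd n) eqn:On; [reflexivity |].
  exfalso. apply nEx. exists k, (Z.div2 n). now rewrite <- Z_even_double.
Qed.

Lemma odd_triadic_sub x y :
  triadic x -> ~ even_triadic x -> triadic y -> ~ even_triadic y ->
  even_triadic (x - y).
Proof.
  intros Tx nEx Ty nEy.
  destruct (triadic_odd_numerator x Tx nEx) as [k [n [Hx On]]].
  destruct (triadic_odd_numerator y Ty nEy) as [j [m [Hy Om]]].
  exists (k + j)%nat, (Z.div2 (n * 3 ^ Z.of_nat j - m * 3 ^ Z.of_nat k)).
  rewrite <- Z_even_double; [exact (sub_numerator x y k j n m Hx Hy) |].
  now rewrite Z.odd_sub, !Z.odd_mul, On, Om, !Z_odd_pow3.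
Qed.

Lemma pow3_gt_INR k : INR k < 3 ^ k.
Proof.
  enough (INR k + 1 <= 3 ^ k) by lra.
  induction k as [|k IH]; [simpl; lra |].
  rewrite S_INR. simpl. pose proof (pos_INR k). lra.
Qed.

Lemma exists_Z_parity_between (c : R) (odd : bool) :
  exists n, Z.odd n = odd /\ c < IZR n <= c + 2.
Proof.
  destruct (archimed c) as [Hup Hup1].
  destruct (Bool.bool_dec (Z.odd (up c)) odd) as [E | E].
  - exists (up c). split; [exact E | lra].
  - exists (up c + 1)%Z. split.
    + rewrite Z.odd_add. destruct (Z.odd (up c)), odd; simpl in *; congruence.
    + rewrite plus_IZR. lra.
Qed.

(* Two consecutive candidates for the numerator fit in ]3^k a, 3^k b[
   as soon as 3^k (b - a) > 2. *)
Lemma exists_triadic_parity_between a b (odd : bool) :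
  a < b -> exists k n, Z.odd n = odd /\ a < IZR n / 3 ^ k < b.
Proof.
  intros Hab.
  destruct (INR_archimed (b - a) 2) as [k Hk]; [lra |].
  pose proof (pow3_gt_INR k). pose proof (pow3_pos k).
  assert (Hwide : 2 < 3 ^ k * (b - a)).
  { apply Rlt_trans with (INR k * (b - a)); [lra |].
    apply Rmult_lt_compat_r; lra. }
  destruct (exists_Z_parity_between (3 ^ k * a) odd) as [n [On Hn]].
  exists k, n. split; [exact On |].
  split; apply Rmult_lt_reg_r with (3 ^ k); trivial; field_simplify; lra.
Qed.

Lemma triadic_div_pow3 k n : (IZR n / 3 ^ k) * 3 ^ k = IZR n.
Proof. field. apply pow_nonzero. lra. Qed.

Lemma even_triadic_dense : dense_in_R even_triadic.
Proof.
  intros a b Hab.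
  destruct (exists_triadic_parity_between a b false Hab) as [k [n [En Hn]]].
  exists (IZR n / 3 ^ k). split; [exact Hn |].
  exists k, (Z.div2 n). now rewrite <- Z_even_double, triadic_div_pow3.
Qed.

Lemma odd_triadic_dense :
  dense_in_R (fun z => triadic z /\ ~ even_triadic z).
Proof.
  intros a b Hab.
  destruct (exists_triadic_parity_between a b true Hab) as [k [n [On Hn]]].
  exists (IZR n / 3 ^ k). split; [exact Hn |]. split.
  - exists k, n. apply triadic_div_pow3.
  - exact (odd_numerator_not_even_triadic _ k n (triadic_div_pow3 k n) On).
Qed.

Theorem mainTheorem1 :
  exists P : R -> Prop,
    dense_in_R P /\
    ~ contains_interval (diff_set P) /\
    ~ contains_interval (diff_set (complR P)).
Proof.
  exists (coset_selection triadic even_triadic).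
  split; [| split].
  - exact (coset_selection_dense triadic even_triadic triadic_0 triadic_sub
             even_triadic_triadic even_triadic_dense).
  - apply (no_interval_of_nonH_free _ _ odd_triadic_dense).
    exact (diff_set_coset_selection triadic even_triadic triadic_0 triadic_sub
             even_triadic_sub).
  - apply (no_interval_of_nonH_free _ _ odd_triadic_dense).
    exact (diff_set_compl_coset_selection triadic even_triadic triadic_0
             triadic_sub odd_triadic_sub).
Qed.
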